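(* Let $(X, M, \ast)$ be a stationary fuzzy metric space (in the sense of George and Veeramani), and write $M(x,y)$ for the constant value of $M(x,y,t)$, $t>0$. Then for every $y\in X$, the function $M_y: X\to\mathbb{R}$, $M_y(x)=M(x,y)$, is $\mathbb{R}$-uniformly continuous; that is, for every $\varepsilon>0$ there exist $s>0$ and $\delta\in(0,1)$ such that for all $x,z\in X$, $M(x,z,s)>1-\delta$ implies $|M_y(x)-M_y(z)|<\varepsilon$.
   Context: A continuous $t$-norm $\ast$ is a continuous binary operation on $[0,1]$ that is associative, commutative, nondecreasing in each argument, and has $1$ as neutral element. A fuzzy metric space (George–Veeramani) is a triple $(X,M,\ast)$ where $X$ is a nonempty set, $\ast$ is a continuous $t$-norm, and $M: X\times X\times(0,+\infty)\to[0,1]$ satisfies, for all $x,y,z\in X$ and $s,t>0$: (GV1) $M(x,y,t)>0$; (GV2) $M(x,y,t)=1$ iff $x=y$; (GV3) $M(x,y,t)=M(y,x,t)$; (GV4) $M(x,y,t)\ast M(y,z,s)\le M(x,z,t+s)$; (GV5) $t\mapsto M(x,y,t)$ is continuous on $(0,+\infty)$. The fuzzy metric $M$ is stationary if for all $x,y\in X$ the function $t\mapsto M(x,y,t)$ is constant. A map $f:X\to\mathbb{R}$ on a fuzzy metric space $(X,M,\ast)$ is $\mathbb{R}$-uniformly continuous if for every $\varepsilon>0$ there exist $s>0$ and $\delta\in(0,1)$ such that $M(x,y,s)>1-\delta$ implies $|f(x)-f(y)|<\varepsilon$. *)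

From Stdlib Require Import Reals.
Open Scope R_scope.

(* A continuous t-norm on [0,1]: values outside [0,1] are irrelevant; all
   axioms are required on [0,1] only. Continuity is joint continuity on
   [0,1]x[0,1]. *)
Definition in01 (a : R) : Prop := 0 <= a <= 1.

Definition continuous_tnorm (T : R -> R -> R) : Prop :=
  (forall a b, in01 a -> in01 b -> in01 (T a b)) /\
  (forall a b c, in01 a -> in01 b -> in01 c -> T a (T b c) = T (T a b) c) /\
  (forall a b, in01 a -> in01 b -> T a b = T b a) /\
  (forall a b c d, in01 a -> in01 b -> in01 c -> in01 d ->
      a <= c -> b <= d -> T a b <= T c d) /\
  (forall a, in01 a -> T a 1 = a) /\
  (forall a b, in01 a -> in01 b -> forall eps, eps > 0 ->
     exists del, del > 0 /\ forall c d, in01 c -> in01 d ->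
       Rabs (c - a) < del -> Rabs (d - b) < del -> Rabs (T c d - T a b) < eps).

Definition GV_fuzzy_metric {X : Type} (M : X -> X -> R -> R) (T : R -> R -> R)
  : Prop :=
  inhabited X /\ continuous_tnorm T /\
  (forall x y t, t > 0 -> in01 (M x y t)) /\
  (forall x y t, t > 0 -> M x y t > 0) /\
  (forall x y t, t > 0 -> (M x y t = 1 <-> x = y)) /\
  (forall x y t, t > 0 -> M x y t = M y x t) /\
  (forall x y z t s, t > 0 -> s > 0 -> T (M x y t) (M y z s) <= M x z (t + s)) /\
  (forall x y t, t > 0 -> continuity_pt (fun u => M x y u) t).

Definition stationary {X : Type} (M : X -> X -> R -> R) : Prop :=
  forall x y t s, t > 0 -> s > 0 -> M x y t = M x y s.

Definition R_uniformly_continuous {X : Type} (M : X -> X -> R -> R)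
  (f : X -> R) : Prop :=
  forall eps, eps > 0 -> exists s delta, s > 0 /\ 0 < delta < 1 /\
    forall x y, M x y s > 1 - delta -> Rabs (f x - f y) < eps.

(** Continuity of [T] at the finitely many points [(1, k/n)], combined with
    monotonicity in the second argument, makes [T a b > b - eps] for all
    [a] close to 1, uniformly in [b]. In a stationary fuzzy metric the
    triangle axiom reads [T (M x z) (M z y) <= M x y]; if [M x z] is close
    to 1 this gives [M x y > M z y - eps], and symmetrically with [x] and
    [z] swapped. *)

From Stdlib Require Import Reals Lra Lia.
Open Scope R_scope.

Lemma common_threshold (P : nat -> R -> Prop) (m : nat) :
  (forall k d d', 0 < d' <= d -> P k d -> P k d') ->
  (forall k, (k <= m)%nat -> exists d, d > 0 /\ P k d) ->
  exists d, d > 0 /\ forall k, (k <= m)%nat -> P k d.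
Proof.
  intros Pmono Pex; induction m as [|m IH].
  - destruct (Pex 0%nat (Nat.le_refl 0)) as [d [d_gt0 Pd]].
    exists d; split; [exact d_gt0|].
    intros k k_le0; replace k with 0%nat by lia; exact Pd.
  - destruct IH as [d [d_gt0 Pd]]; [intros k k_le; apply Pex; lia|].
    destruct (Pex (S m) (Nat.le_refl _)) as [d' [d'_gt0 Pd']].
    exists (Rmin d d'); split; [now apply Rmin_glb_lt|].
    intros k k_le; destruct (Nat.le_gt_cases k m) as [k_le_m | k_gt_m].
    + apply (Pmono k d); [split; [now apply Rmin_glb_lt | apply Rmin_l]|].
      now apply Pd.
    + replace k with (S m) by lia.
      apply (Pmono (S m) d'); [split; [now apply Rmin_glb_lt | apply Rmin_r]|].
      exact Pd'.
Qed.

Lemma grid_point_below (n : nat) (b : R) : (0 < n)%nat -> 0 <= b ->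
  forall k, b <= INR k / INR n ->
  exists j, (j <= k)%nat /\ INR j / INR n <= b <= INR j / INR n + / INR n.
Proof.
  intros n_gt0 b_ge0.
  assert (n_pos : 0 < INR n) by (apply lt_0_INR; lia).
  induction k as [|k IH]; intros b_le.
  - exists 0%nat; split; [lia|].
    assert (0 < / INR n) by (apply Rinv_0_lt_compat; lra).
    rewrite Rdiv_0_l in *; lra.
  - destruct (Rle_dec b (INR k / INR n)) as [b_le_k | b_gt_k].
    + destruct (IH b_le_k) as [j [j_le Hj]].
      exists j; split; [lia | exact Hj].
    + apply Rnot_le_lt in b_gt_k.
      exists k; split; [lia|].
      rewrite S_INR in b_le.
      replace ((INR k + 1) / INR n) with (INR k / INR n + / INR n) in b_le
        by (field; lra).
      lra.
Qed.

Lemma grid_point_in01 (n k : nat) : (0 < n)%nat -> (k <= n)%nat ->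
  in01 (INR k / INR n).
Proof.
  intros n_gt0 k_le.
  assert (n_pos : 0 < INR n) by (apply lt_0_INR; lia).
  assert (INR k <= INR n) by (apply le_INR; exact k_le).
  split.
  - apply Rle_mult_inv_pos; [apply pos_INR | exact n_pos].
  - apply (Rmult_le_reg_r (INR n)); [exact n_pos|].
    field_simplify; lra.
Qed.

Section ContinuousTnorm.

Variable T : R -> R -> R.
Hypothesis HT : continuous_tnorm T.

Lemma tnorm_near_1l (c e : R) : in01 c -> e > 0 ->
  exists d, d > 0 /\ forall a, in01 a -> 1 - a < d -> T a c > c - e.
Proof.
  intros c01 e_gt0.
  destruct HT as (_ & _ & Tcom & _ & Tone & Tcont).
  assert (one01 : in01 1) by (split; lra).
  destruct (Tcont 1 c one01 c01 e e_gt0) as [d [d_gt0 Hd]].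
  exists d; split; [exact d_gt0|]; intros a a01 a_near.
  assert (close : Rabs (T a c - T 1 c) < e).
  { pose proof a01 as [_ a_le1]; apply Hd; trivial.
    - rewrite Rabs_left1; lra.
    - rewrite Rminus_diag, Rabs_R0; lra. }
  rewrite (Tcom 1 c), Tone in close by trivial.
  apply Rabs_def2 in close; lra.
Qed.

Lemma tnorm_near_1l_uniform (e : R) : e > 0 ->
  exists d, d > 0 /\
    forall a b, in01 a -> in01 b -> 1 - a < d -> T a b > b - e.
Proof.
  intros e_gt0.
  destruct (archimed_cor1 (e / 2) ltac:(lra)) as [n [n_inv_lt n_gt0]].
  assert (n_pos : 0 < INR n) by (apply lt_0_INR; lia).
  destruct (common_threshold
    (fun k d => forall a, in01 a -> 1 - a < d ->
       T a (INR k / INR n) > INR k / INR n - e / 2) n)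
    as [d [d_gt0 Hd]].
  { intros k d d' [d'_gt0 d'_le] Hk a a01 a_near; apply Hk; trivial; lra. }
  { intros k k_le; apply tnorm_near_1l; [now apply grid_point_in01 | lra]. }
  exists d; split; [exact d_gt0|]; intros a b a01 b01 a_near.
  destruct (grid_point_below n b n_gt0 (proj1 b01) n)
    as [k [k_le [k_le_b b_le_k]]].
  { unfold Rdiv; rewrite Rinv_r by lra; apply b01. }
  assert (k01 : in01 (INR k / INR n)) by (apply grid_point_in01; trivial).
  assert (T a (INR k / INR n) <= T a b).
  { destruct HT as (_ & _ & _ & Tmon & _); apply Tmon; trivial; lra. }
  specialize (Hd k k_le a a01 a_near); lra.
Qed.

End ContinuousTnorm.

Lemma stationary_triangle (X : Type) (M : X -> X -> R -> R) (T : R -> R -> R)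
  (HM : GV_fuzzy_metric M T) (Hst : stationary M) (x y z : X) (t : R) :
  t > 0 -> T (M x y t) (M y z t) <= M x z t.
Proof.
  intros t_gt0.
  destruct HM as (_ & _ & _ & _ & _ & _ & Htri & _).
  rewrite (Hst x z t (t + t)) by lra.
  now apply Htri.
Qed.

Theorem mainTheorem1 (X : Type) (M : X -> X -> R -> R) (T : R -> R -> R)
  (HM : GV_fuzzy_metric M T) (Hst : stationary M) (y : X) :
  R_uniformly_continuous M (fun x => M x y 1).
Proof.
  pose proof HM as (_ & HT & Hin & _ & _ & Hsym & _).
  intros eps eps_gt0.
  destruct (tnorm_near_1l_uniform T HT eps eps_gt0) as [d [d_gt0 Hd]].
  exists 1, (Rmin d (1 / 2)).
  pose proof (Rmin_l d (1 / 2)); pose proof (Rmin_r d (1 / 2)).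
  split; [lra|]; split; [split; [apply Rmin_glb_lt; lra | lra]|].
  intros x z xz_near.
  assert (one_gt0 : 1 > 0) by lra.
  assert (via_z : T (M x z 1) (M z y 1) <= M x y 1)
    by now apply (stationary_triangle X M T HM Hst).
  assert (via_x : T (M x z 1) (M x y 1) <= M z y 1).
  { rewrite (Hsym x z 1 one_gt0).
    now apply (stationary_triangle X M T HM Hst). }
  pose proof (Hd (M x z 1) (M z y 1) (Hin _ _ _ one_gt0) (Hin _ _ _ one_gt0)).
  pose proof (Hd (M x z 1) (M x y 1) (Hin _ _ _ one_gt0) (Hin _ _ _ one_gt0)).
  apply Rabs_def1; lra.
Qed.
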